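(* Let $\mathcal{F}$ be a finite set of graphs. For every integer $T>0$ and real $\lambda>0$: (i) with $r=\sqrt{(T+1)n}$ and $n\ge r^2/\lambda^2$, $\mathsf{VC}\text{-}\mathsf{dim}\big(\mathbb{H}_{r,\lambda}(\mathcal{E}_{\mathsf{WLOA},\mathcal{F}}(n,d_T))\big)\in\Theta(r^2/\lambda^2)$; (ii) with $r=\sqrt{T/(T+1)}$ and $n\ge r^2/\lambda^2$, $\mathsf{VC}\text{-}\mathsf{dim}\big(\mathbb{H}_{1,\lambda}(\overline{\mathcal{E}}_{\mathsf{WLOA},\mathcal{F}}(n,d_T))\big)\in\Theta(1/\lambda^2)$.
   Context: $\mathcal{G}_n$ is the set of (unlabeled, simple, undirected) graphs on $n$ vertices. $1$-WL$_{\mathcal{F}}$ colouring: $C^{1,\mathcal{F}}_0(v)=(\ell_F(v))_{F\in\mathcal{F}}$ with $\ell_F(v)=1$ if $v$ lies in some $X\subseteq V(G)$ with $G[X]$ isomorphic to $F$, else $0$; $C^{1,\mathcal{F}}_t(v)=\mathsf{RELABEL}(C^{1,\mathcal{F}}_{t-1}(v),\{\!\{C^{1,\mathcal{F}}_{t-1}(u):u\in N(v)\}\!\})$ with a fixed injective $\mathsf{RELABEL}$ shared by all graphs; $\Sigma_t$ is the set of round-$t$ colours over $\mathcal{G}_n$, and $\phi_{\mathcal{F},t}(G)_c$ the number of vertices of $G$ with colour $c$ at round $t$. $\phi^{(T)}_{\mathsf{WLOA},\mathcal{F}}(G)\in\{0,1\}^{d_T}$ has a coordinate for each $(t,c,j)$,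 $t\in\{0,\dots,T\}$, $c\in\Sigma_t$, $j\in\{1,\dots,n\}$, equal to $1$ iff $\phi_{\mathcal{F},t}(G)_c\ge j$; $\overline{\phi^{(T)}_{\mathsf{WLOA},\mathcal{F}}}$ is its unit-norm normalisation; $\mathcal{E}_{\mathsf{WLOA},\mathcal{F}}(n,d_T)=\{\phi^{(T)}_{\mathsf{WLOA},\mathcal{F}}\}$, $\overline{\mathcal{E}}_{\mathsf{WLOA},\mathcal{F}}(n,d_T)=\{\overline{\phi^{(T)}_{\mathsf{WLOA},\mathcal{F}}}\}$. A sample is $(r,\lambda)$-separable if its points lie in a ball of radius $r$ and the distance between the convex hulls of the two classes is at least $2\lambda$. $\mathbb{H}_{r,\lambda}(\mathcal{E})$: partial concepts $h:\mathcal{G}_n\to\{0,1,\star\}$ such that every finite list of graphs with $h\ne\star$, labelled by $h$ and embedded by some $\mathrm{emb}\in\mathcal{E}$, is $(r,\lambda)$-separable. VC dimension: largest size of a shattered set. *)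

From HB Require Import structures.
From mathcomp Require Import all_boot all_order all_algebra.
From mathcomp Require Import boolp reals.
Set Implicit Arguments. Unset Strict Implicit. Unset Printing Implicit Defensive.
Import Order.TTheory GRing.Theory Num.Theory.
Local Open Scope ring_scope.

Definition is_graph n (g : {ffun 'I_n -> {ffun 'I_n -> bool}}) : bool :=
  [forall u, forall v, g u v == g v u] && [forall u, ~~ g u u].
Notation graph n := {g : {ffun 'I_n -> {ffun 'I_n -> bool}} | is_graph g}.
Definition adj n (G : graph n) (u v : 'I_n) : bool := val G u v.

Definition pattern := {k : nat & graph k}.

Definition ell n (F : pattern) (G : graph n) (v : 'I_n) : bool :=
  let: existT k H := F in
  [exists X : {set 'I_n}, exists f : {ffun 'I_k -> 'I_n},
     [&& v \in X, injectiveb f, f @: setT == X &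
         [forall a, forall b, adj H a b == adj G (f a) (f b)]]].

(* Fixed injective RELABEL : nat * (multiset of nat) -> nat, shared by all
   graphs: the multiset is represented canonically by its sorted list and
   the pair is encoded by the bijection CodeSeq.code : seq nat -> nat. *)
Definition relabel (c : nat) (M : seq nat) : nat :=
  CodeSeq.code (c :: sort leq M).

Fixpoint wlcol (Fs : seq pattern) (t : nat) n (G : graph n) (v : 'I_n) : nat :=
  match t with
  | 0 => CodeSeq.code [seq nat_of_bool (ell F G v) | F <- Fs]
  | t'.+1 => relabel (wlcol Fs t' G v)
                     [seq wlcol Fs t' G u | u <- enum 'I_n & adj G v u]
  end.

Definition Sigma (Fs : seq pattern) n (t : nat) : seq nat :=
  undup [seq wlcol Fs t G v | G <- enum {: graph n}, v <- enum 'I_n].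

Definition wlcount (Fs : seq pattern) n (t : nat) (G : graph n) (c : nat) : nat :=
  #|[set v : 'I_n | wlcol Fs t G v == c]|.

Definition coords (Fs : seq pattern) n (T : nat) : seq (nat * nat * nat) :=
  flatten [seq [seq (t, c, j) | c <- Sigma Fs n t, j <- iota 1 n]
          | t <- iota 0 T.+1].

Definition dT (Fs : seq pattern) n (T : nat) : nat := size (coords Fs n T).

Section Vec.
Variable R : realType.

Definition sqnorm (I : finType) (x : I -> R) : R := \sum_i x i ^+ 2.
Definition vnorm (I : finType) (x : I -> R) : R := Num.sqrt (sqnorm x).
Definition vdist (I : finType) (x y : I -> R) : R := vnorm (fun i => x i - y i).

Definition phiWLOA (Fs : seq pattern) n (T : nat) (G : graph n)
  : 'I_(dT Fs n T) -> R :=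
  fun i => let: (t, c, j) := nth (0, 0, 0)%N (coords Fs n T) i in
           if (j <= wlcount Fs t G c)%N then 1 else 0.

Definition nphiWLOA (Fs : seq pattern) n (T : nat) (G : graph n)
  : 'I_(dT Fs n T) -> R :=
  fun i => @phiWLOA Fs n T G i / vnorm (@phiWLOA Fs n T G).

Definition inHull (I : finType) (S : seq (I -> R)) (p : I -> R) : Prop :=
  exists w : 'I_(size S) -> R,
    [/\ forall k, 0 <= w k, \sum_k w k = 1 &
        forall i, p i = \sum_k w k * nth (fun _ => 0) S k i].

(* (r, lambda)-separable labelled sample (points in the closed ball of
   radius r around the origin; convex hulls of the two classes at
   distance >= 2 lambda, i.e. inf of pairwise distances >= 2 lambda). *)
Definition separable (I : finType) (r lam : R) (s : seq ((I -> R) * bool)) : Prop :=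
  (forall x, x \in [seq y.1 | y <- s] -> vnorm x <= r) /\
  forall p q, inHull [seq y.1 | y <- s & ~~ y.2] p ->
              inHull [seq y.1 | y <- s & y.2] q ->
              2 * lam <= vdist p q.

(* H_{r,lambda}({emb}) : partial concepts (None = star, Some b = label b) *)
Definition Hclass n (I : finType) (r lam : R) (emb : graph n -> I -> R)
  (h : graph n -> option bool) : Prop :=
  forall s : seq (graph n), (forall g, g \in s -> h g <> None) ->
    separable r lam [seq (emb g, odflt false (h g)) | g <- s].

Definition shattered n (H : (graph n -> option bool) -> Prop) (S : {set graph n}) : Prop :=
  forall b : graph n -> bool, exists h, H h /\ forall g, g \in S -> h g = Some (b g).

Definition VCdim n (H : (graph n -> option bool) -> Prop) : nat :=
  \max_(S : {set graph n} | `[< shattered H S >]) #|S|.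

End Vec.
Arguments phiWLOA {R} Fs {n} T G _.
Arguments nphiWLOA {R} Fs {n} T G _.

(* Upper bound, for any embedding into the ball of radius r: split a shattered
   set into two halves of size k, pair them up and orient each pair so that
   the k differences, added greedily, never make an acute angle with the
   running sum; that sum then has squared norm at most 4 k r^2. Labelling the
   halves differently, the class means lie in the two convex hulls, so they are
   2 lam apart, while their difference is 1/k times that sum: k <= r^2 / lam^2.

   Lower bound: on n vertices, let u ~ v iff u != v and (u + v) mod n < 2 s + 1.
   These graphs have degrees 2s or 2s+1, so for distinct s their WL colours at
   every round t >= 1 are disjoint. Hence each of K such graphs owns a block of
   T n coordinates of the WLOA embedding on which it is 1 and the others are 0.
   Two convex combinations of disjoint subfamilies differ on every block, and
   completing the square shows that their squared distance is at least
   4 T n / K (4 T / ((T + 1) K) after normalisation). So the K graphs are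
   shattered as soon as lam^2 K <= T n (resp. T / (T + 1)); take K of order
   r^2 / lam^2. *)

From HB Require Import structures.
From mathcomp Require Import all_boot all_order all_algebra.
From mathcomp Require Import boolp reals.
From mathcomp Require Import zify ring lra.
Import Order.TTheory GRing.Theory Num.Theory.
Set Implicit Arguments. Unset Strict Implicit. Unset Printing Implicit Defensive.
Local Open Scope ring_scope.

Section Euclidean.
Variables (R : realType) (I : finType).
Implicit Types (x y p q : I -> R) (c r : R).

Lemma sqnorm_ge0 x : 0 <= sqnorm x.
Proof. by apply: sumr_ge0 => i _; apply: sqr_ge0. Qed.

Lemma sqnormD x y :
  sqnorm (fun i => x i + y i) = sqnorm x + 2 * (\sum_i x i * y i) + sqnorm y.
Proof. by rewrite /sqnorm mulr_sumr -!big_split /=; apply: eq_bigr => i _; ring. Qed.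

Lemma sqnormZ c x : sqnorm (fun i => c * x i) = c ^+ 2 * sqnorm x.
Proof. by rewrite /sqnorm mulr_sumr; apply: eq_bigr => i _; ring. Qed.

Lemma sqnormN x : sqnorm (fun i => - x i) = sqnorm x.
Proof. by apply: eq_bigr => i _; rewrite sqrrN. Qed.

Lemma sqnormB_le x y : sqnorm (fun i => x i - y i) <= 2 * sqnorm x + 2 * sqnorm y.
Proof.
rewrite /sqnorm !mulr_sumr -big_split; apply: ler_sum => i _ /=.
by have := sqr_ge0 (x i + y i); lra.
Qed.

Lemma vnorm_le_sqr x r : vnorm x <= r -> sqnorm x <= r ^+ 2.
Proof.
move=> xr; have r0 : 0 <= r by apply: le_trans xr; apply: sqrtr_ge0.
by rewrite -(sqr_sqrtr (sqnorm_ge0 x)) lerXn2r ?nnegrE ?sqrtr_ge0.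
Qed.

Lemma vdist_ge_sqr c p q :
  0 <= c -> (c <= vdist p q) = (c ^+ 2 <= sqnorm (fun i => p i - q i)).
Proof. by move=> c0; rewrite -[RHS]ler_sqrt ?sqnorm_ge0 // sqrtr_sqr ger0_norm. Qed.

Lemma vnorm_normalize x : 0 < sqnorm x -> vnorm (fun i => x i / vnorm x) = 1.
Proof.
move=> x0; under eq_fun => i do rewrite mulrC.
by rewrite /vnorm sqnormZ exprVn sqr_sqrtr ?mulVf ?sqrtr1 ?gt_eqF ?sqnorm_ge0.
Qed.

Lemma inHull_mean (xs : seq (I -> R)) :
  (0 < size xs)%N -> inHull xs (fun i => (size xs)%:R^-1 * \sum_(x <- xs) x i).
Proof.
move=> xs0; exists (fun _ => (size xs)%:R^-1); split.
- by move=> k; rewrite invr_ge0 ler0n.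
- by rewrite sumr_const card_ord -[_ *+ _]mulr_natr mulVf // pnatr_eq0 -lt0n.
- by move=> i; rewrite -mulr_sumr (big_nth (fun _ => 0)) big_mkord.
Qed.

(* Compare the means of the two lists, which lie in the two hulls. *)
Lemma far_hulls_sum_sqdist_ge (xs ys : seq (I -> R)) lam :
  size xs = size ys -> (0 < size xs)%N -> 0 <= lam ->
  (forall p q, inHull xs p -> inHull ys q -> 2 * lam <= vdist p q) ->
  4 * lam ^+ 2 * (size xs)%:R ^+ 2 <=
    sqnorm (fun i => \sum_(x <- xs) x i - \sum_(y <- ys) y i).
Proof.
move=> sxy xs0 lam0 far.
have -> : 4 * lam ^+ 2 * (size xs)%:R ^+ 2 = (size xs)%:R ^+ 2 * (2 * lam) ^+ 2 by ring.
have := far _ _ (inHull_mean xs0) (inHull_mean (xs := ys) ltac:(by rewrite -sxy)).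
rewrite -sxy vdist_ge_sqr ?mulr_ge0 //.
under [X in _ <= sqnorm X -> _]funext => i do rewrite -mulrBr.
by rewrite sqnormZ exprVn ler_pdivlMl ?exprn_gt0 ?ltr0n.
Qed.
End Euclidean.

(** * Upper bound *)

Section Orientation.
Variables (R : realType) (X : eqType) (I : finType) (emb : X -> I -> R).

Definition pair_diff (p : X * X) : I -> R := fun i => emb p.1 i - emb p.2 i.

Definition oriented (q p : X * X) : bool := (q == p) || (q == (p.2, p.1)).

Lemma perm_unzip_oriented qs ps : all2 oriented qs ps ->
  perm_eq (unzip1 qs ++ unzip2 qs) (unzip1 ps ++ unzip2 ps).
Proof.
elim: qs ps => [|q qs IH] [|p ps] //= /andP [qp /IH /permP perm_qs].
apply/permP => P; move: (perm_qs P); rewrite /= !count_cat /=.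
by case/orP: qp => /eqP -> /=; lia.
Qed.

(* Orient the pairs one at a time so that each new difference makes a
   non-acute angle with the running sum. *)
Lemma exists_oriented_short_sum ps : exists2 qs, all2 oriented qs ps &
  sqnorm (fun i => \sum_(q <- qs) pair_diff q i) <= \sum_(p <- ps) sqnorm (pair_diff p).
Proof.
elim: ps => [|p ps [qs oqs short]].
  exists [::] => //; rewrite big_nil /sqnorm big1 // => i _.
  by rewrite big_nil expr0n.
set v := fun i => \sum_(q <- qs) pair_diff q i.
have add_obtuse w : \sum_i w i * v i <= 0 ->
    sqnorm (fun i => w i + v i) <= sqnorm w + \sum_(p <- ps) sqnorm (pair_diff p).
  by rewrite sqnormD; lra.
have [obtuse|acute] := lerP (\sum_i pair_diff p i * v i) 0.
  exists (p :: qs); first by rewrite /= /oriented eqxx.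
  under eq_fun => i do rewrite big_cons.
  by rewrite big_cons; apply: add_obtuse.
exists ((p.2, p.1) :: qs); first by rewrite /= /oriented eqxx orbT.
have flipE : pair_diff (p.2, p.1) = fun i => - pair_diff p i.
  by apply: funext => i; rewrite /pair_diff opprB.
under eq_fun => i do rewrite big_cons flipE.
rewrite big_cons -(sqnormN (pair_diff p)); apply: add_obtuse.
rewrite (eq_bigr (fun i => - (pair_diff p i * v i))) ?sumrN ?oppr_le0 ?ltW //.
by move=> i _; rewrite mulNr.
Qed.

End Orientation.

Lemma split_halves (T : finType) (S : {set T}) : exists A B : seq T,
  [/\ uniq (A ++ B), {subset A ++ B <= S}, size A = size B & (#|S| <= 2 * size A + 1)%N].
Proof.
pose k := #|S|./2.
have kS : (k <= #|S| - k)%N by rewrite /k -{2 3}(odd_double_half #|S|); lia.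
exists (take k (enum S)), (take k (drop k (enum S))); rewrite -takeD.
split=> [||//|].
- exact/take_uniq/enum_uniq.
- by move=> g /mem_take; rewrite mem_enum.
- by rewrite !size_takel ?size_drop -?cardE // (leq_trans kS) ?leq_subr.
- by rewrite size_takel -?cardE ?leq_subr /k -{1}(odd_double_half #|S|); lia.
Qed.

Lemma exists_split_short_sum (R : realType) (X I : finType) (emb : X -> I -> R)
    (S : {set X}) (c : R) : (forall g, g \in S -> sqnorm (emb g) <= c) ->
  exists A B : seq X, [/\ uniq (A ++ B), {subset A ++ B <= S}, size A = size B,
    (#|S| <= 2 * size A + 1)%N &
    sqnorm (fun i => \sum_(g <- A) emb g i - \sum_(g <- B) emb g i)
      <= (size A)%:R * (4 * c)].
Proof.
move=> ballS; have [A [B [uAB sAB sizeAB cardS]]] := split_halves S.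
have [qs oqs short] := exists_oriented_short_sum emb (zip A B).
have permAB : perm_eq (unzip1 qs ++ unzip2 qs) (A ++ B).
  have <- : unzip1 (zip A B) ++ unzip2 (zip A B) = A ++ B.
    by rewrite unzip1_zip ?unzip2_zip ?sizeAB.
  exact: perm_unzip_oriented.
have sizeqs : size qs = size A.
  by move: oqs; rewrite all2E size_zip sizeAB minnn => /andP [/eqP].
exists (unzip1 qs), (unzip2 qs); rewrite !size_map sizeqs (perm_uniq permAB).
split=> //; first by move=> g; rewrite (perm_mem permAB); apply: sAB.
have -> : (fun i => \sum_(g <- unzip1 qs) emb g i - \sum_(g <- unzip2 qs) emb g i)
        = (fun i => \sum_(q <- qs) pair_diff emb q i).
  by apply: funext => i; rewrite !big_map -sumrB.
apply: le_trans short _.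
have pair_bound p : p \in zip A B -> sqnorm (pair_diff emb p) <= 4 * c.
  move=> pAB; apply: le_trans (sqnormB_le _ _) _.
  have p1 : p.1 \in S by rewrite sAB // mem_cat -{1}(unzip1_zip (eq_leq sizeAB)) map_f.
  have p2 : p.2 \in S.
    by rewrite sAB // mem_cat -{1}(unzip2_zip (eq_leq (esym sizeAB))) map_f ?orbT.
  by have := ballS _ p1; have := ballS _ p2; lra.
apply: (@le_trans _ _ (\sum_(p <- zip A B) 4 * c)).
  by rewrite big_seq [X in _ <= X]big_seq; apply: ler_sum => p /pair_bound.
rewrite big_const_seq count_predT iter_addr_0 size_zip -sizeAB minnn.
by rewrite -[_ *+ size A]mulr_natl.
Qed.

Lemma filter_mem_cat (T : eqType) (A B : seq T) : uniq (A ++ B) ->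
  [seq g <- A ++ B | g \notin B] = A /\ [seq g <- A ++ B | g \in B] = B.
Proof.
rewrite cat_uniq => /and3P [_ /hasPn disjBA uB]; rewrite !filter_cat.
have noneA : [seq g <- A | g \in B] = [::].
  apply/eqP; rewrite -[_ == _]negbK -has_filter; apply/hasPn => g gA.
  by apply: contraL gA; apply: disjBA.
have noneB : [seq g <- B | g \notin B] = [::].
  by apply/eqP; rewrite -[_ == _]negbK -has_filter; apply/hasPn => g ->.
split; last by rewrite noneA; apply/all_filterP/allP.
rewrite noneB cats0; apply/all_filterP/allP => g gA.
by apply: contraL gA; apply: disjBA.
Qed.

Section Shattering.
Variables (R : realType) (n : nat) (I : finType) (emb : graph n -> I -> R) (r lam : R).
Implicit Types (S : {set graph n}) (s : seq (graph n)) (b : graph n -> bool).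

Lemma shatteredP S : shattered (Hclass r lam emb) S <->
  forall b s, {subset s <= S} -> separable r lam [seq (emb g, b g) | g <- s].
Proof.
split=> [shS b s sS | sepS b].
  have [h [hH hb]] := shS b.
  have <- : [seq (emb g, odflt false (h g)) | g <- s] = [seq (emb g, b g) | g <- s].
    by apply/eq_in_map => g /sS /hb ->.
  by apply: hH => g /sS /hb ->.
exists (fun g => if g \in S then Some (b g) else None); split=> [s hs|g -> //].
have sS : {subset s <= S} by move=> g /hs; case: (g \in S).
have -> : [seq (emb g, odflt false (if g \in S then Some (b g) else None)) | g <- s]
        = [seq (emb g, b g) | g <- s] by apply/eq_in_map => g /sS ->.
exact: sepS.
Qed.

Lemma separable_labelled s b :
  separable r lam [seq (emb g, b g) | g <- s] <->
  {in s, forall g, vnorm (emb g) <= r} /\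
  (forall p q, inHull (map emb [seq g <- s | ~~ b g]) p ->
               inHull (map emb [seq g <- s | b g]) q -> 2 * lam <= vdist p q).
Proof.
rewrite /separable !filter_map -!map_comp.
split=> [[ball far]|[ball far]]; split=> //.
- by move=> g gs; apply: ball; apply: map_f.
- by move=> x /mapP [g gs ->]; apply: ball.
Qed.

(* Label one half of a balanced split [false], the other [true]: the class
   means are [2 lam] apart, yet their difference is short. *)
Lemma shattered_card_le S : 0 < lam -> shattered (Hclass r lam emb) S ->
  #|S|%:R <= 2 * (r ^+ 2 / lam ^+ 2) + 1.
Proof.
move=> lam0 /shatteredP sepS.
have ballS g : g \in S -> sqnorm (emb g) <= r ^+ 2.
  have enumS : {subset enum S <= S} by move=> g'; rewrite mem_enum.
  have [ball _] := (separable_labelled _ _).1 (sepS xpredT _ enumS).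
  by rewrite -mem_enum => /ball /vnorm_le_sqr.
have [A [B [uAB sAB sizeAB cardS short]]] := exists_split_short_sum ballS.
suff : (size A)%:R <= r ^+ 2 / lam ^+ 2.
  by move: cardS; rewrite -(ler_nat R) natrD natrM; lra.
have [->|A0] := posnP (size A); first by rewrite divr_ge0 ?sqr_ge0.
have [_] := (separable_labelled _ _).1 (sepS (fun g => g \in B) _ sAB).
have [-> ->] := filter_mem_cat uAB => far.
have := far_hulls_sum_sqdist_ge _ _ (ltW lam0) far.
rewrite !size_map -sizeAB => /(_ erefl A0).
under [X in _ <= sqnorm X]funext => i do rewrite !big_map.
move=> /le_trans /(_ short).
rewrite ler_pdivlMr ?exprn_gt0 //; set k := (size A)%:R.
have k0 : 0 < k by rewrite ltr0n.
by nra.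
Qed.

End Shattering.

Lemma VCdim_le (R : realType) n (H : (graph n -> option bool) -> Prop) (c : R) :
  0 <= c -> (forall S, shattered H S -> #|S|%:R <= c) -> (VCdim H)%:R <= c.
Proof.
move=> c0 shattered_le; apply: (big_ind (fun k : nat => k%:R <= c)) => //.
  by move=> x y xc yc; rewrite /maxn; case: ltnP.
by move=> S /asboolP; apply: shattered_le.
Qed.

Lemma card_le_VCdim n (H : (graph n -> option bool) -> Prop) S :
  shattered H S -> (#|S| <= VCdim H)%N.
Proof.
move=> shS; apply: (@leq_bigmax_cond _ (fun S => `[< shattered H S >]) (fun S => #|S|)).
exact/asboolP.
Qed.

Lemma VCdim_le_linear (R : realType) n (I : finType) (emb : graph n -> I -> R) (r lam : R) :
  0 < lam -> 1 <= r ^+ 2 / lam ^+ 2 ->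
  (VCdim (Hclass r lam emb))%:R <= 3 * (r ^+ 2 / lam ^+ 2).
Proof.
move=> lam0 X1; apply: VCdim_le; first lra.
by move=> S /(shattered_card_le lam0); lra.
Qed.

(** * Lower bound: block embeddings *)

Lemma sum_sqr_disjoint_weights (R : realType) (X : finType) (S : {set X}) (al be : X -> R) :
  (0 < #|S|)%N -> \sum_(g in S) al g = 1 -> \sum_(g in S) be g = 1 ->
  (forall g, al g * be g = 0) ->
  4 / #|S|%:R <= \sum_(g in S) (al g - be g) ^+ 2.
Proof.
move=> S0 sal sbe albe; set m : R := #|S|%:R.
have m0 : 0 < m by rewrite ltr0n.
(* Complete the square around the uniform weight [2 / m] of [al + be]. *)
have sqE g : (al g - be g) ^+ 2
    = (al g + be g - 2 / m) ^+ 2 + 4 / m * (al g + be g) - (2 / m) ^+ 2.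
  by rewrite -[LHS]addr0 -(mulr0 4) -(albe g); ring.
rewrite (eq_bigr _ (fun g _ => sqE g)) sumrB big_split -mulr_sumr big_split /=.
rewrite sal sbe sumr_const -[_ *+ #|S|]mulr_natr -/m.
have -> : (2 / m) ^+ 2 * m = 4 / m by field; rewrite gt_eqF.
have : 0 <= \sum_(g in S) (al g + be g - 2 / m) ^+ 2.
  by apply: sumr_ge0 => g _; apply: sqr_ge0.
lra.
Qed.

Definition block_embedding (R : realType) (X I : finType) (emb : X -> I -> R)
    (S : {set X}) (J : X -> {set I}) (a : X -> R) : Prop :=
  (forall g g' i, g \in S -> g' \in S -> i \in J g -> emb g' i = (g' == g)%:R * a g) /\
  (forall g g', g \in S -> g' \in S -> g != g' -> [disjoint J g & J g']).

Lemma block_embedding_scale (R : realType) (X I : finType) (emb : X -> I -> R)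
    S J a (c : R) : block_embedding emb S J a ->
  block_embedding (fun g i => emb g i / c) S J (fun g => a g / c).
Proof.
by case=> emb_block disjJ; split=> // g g' i gS g'S iJ; rewrite (emb_block g) // mulrA.
Qed.

Section BlockEmbedding.
Variables (R : realType) (X I : finType) (emb : X -> I -> R).
Variables (S : {set X}) (J : X -> {set I}) (a : X -> R).
Hypothesis embJ : block_embedding emb S J a.

Lemma inHull_blocks (A : seq X) p : {subset A <= S} -> inHull (map emb A) p ->
  exists al : X -> R, [/\ forall g, 0 <= al g, forall g, g \notin A -> al g = 0,
     \sum_(g in S) al g = 1 & forall g i, g \in S -> i \in J g -> p i = al g * a g].
Proof.
move=> AS [w [w0 w1 wp]]; case: A AS w w0 w1 wp => [|g0 A'] AS w w0 w1 wp.
  by move: w1; rewrite big_ord0 => /eqP; rewrite eq_sym oner_eq0.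
set A := g0 :: A' in AS w w0 w1 wp *.
have sizeA : size (map emb A) = size A by rewrite size_map.
have nthA (k : 'I_(size (map emb A))) : nth g0 A k \in A.
  by apply: mem_nth; rewrite -sizeA.
pose al g := \sum_(k < size (map emb A)) w k * (nth g0 A k == g)%:R.
exists al; split.
- by move=> g; apply: sumr_ge0 => k _; apply: mulr_ge0.
- move=> g gA; apply: big1 => k _.
  by case: eqP (nthA k) => [->|_ _]; rewrite ?(negbTE gA) ?mulr0.
- rewrite /al exchange_big /= -[RHS]w1; apply: eq_bigr => k _.
  rewrite -mulr_sumr (bigD1 (nth g0 A k)) ?AS //= eqxx big1 ?addr0 ?mulr1 //.
  by move=> g /andP [_ /negbTE]; rewrite eq_sym => ->.
- move=> g i gS iJ; rewrite wp /al mulr_suml; apply: eq_bigr => k _.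
  case: embJ => emb_block _; rewrite (nth_map g0) -?sizeA //.
  by rewrite (emb_block g _ _ gS (AS _ (nthA k)) iJ) mulrA.
Qed.

Lemma hull_sqdist_ge (N : R) (A B : seq X) p q :
  0 <= N -> (forall g, g \in S -> N <= #|J g|%:R * a g ^+ 2) ->
  {subset A <= S} -> {subset B <= S} -> (forall g, g \in A -> g \notin B) ->
  inHull (map emb A) p -> inHull (map emb B) q ->
  4 * N / #|S|%:R <= sqnorm (fun i => p i - q i).
Proof.
move=> N0 blockN AS BS AB hullp hullq.
have [al [al0 alA sal pal]] := inHull_blocks AS hullp.
have [be [be0 beB sbe qbe]] := inHull_blocks BS hullq.
have S0 : (0 < #|S|)%N.
  rewrite lt0n; apply: contra_eqN sal => /eqP /cards0_eq ->.
  by rewrite big_set0 eq_sym oner_eq0.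
have albe g : al g * be g = 0.
  by case: (boolP (g \in A)) => [/AB /beB ->|/alA ->]; rewrite ?mulr0 ?mul0r.
pose JS g := if g \in S then J g else set0.
have JS_disjoint g g' : g != g' -> [disjoint JS g & JS g'].
  rewrite /JS -setI_eq0; case: ifP => gS; last by rewrite set0I.
  by case: ifP => g'S; [rewrite setI_eq0; apply: embJ.2 | rewrite setI0].
set f := fun i => (p i - q i) ^+ 2.
have on_blocks : \sum_(i in \bigcup_g JS g) f i <= sqnorm (fun i => p i - q i).
  rewrite /sqnorm [X in _ <= X](bigID (mem (\bigcup_g JS g))) /= -/f lerDl.
  by apply: sumr_ge0 => i _; apply: sqr_ge0.
apply: le_trans on_blocks; rewrite (partition_disjoint_bigcup _ _ JS_disjoint).
have -> : \sum_g \sum_(i in JS g) f i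
        = \sum_(g in S) (#|J g|%:R * a g ^+ 2) * (al g - be g) ^+ 2.
  rewrite [RHS]big_mkcond; apply: eq_bigr => g _; rewrite /JS.
  case: ifP => gS; last by rewrite big_set0.
  rewrite (eq_bigr (fun _ => ((al g - be g) * a g) ^+ 2)) ?sumr_const.
    by rewrite -mulr_natl; ring.
  by move=> i iJ; rewrite /f (pal g) // (qbe g) // mulrBl.
apply: le_trans (_ : \sum_(g in S) N * (al g - be g) ^+ 2 <= _).
  rewrite -mulr_sumr (_ : 4 * N / _ = N * (4 / #|S|%:R)); last by ring.
  by rewrite ler_wpM2l // sum_sqr_disjoint_weights.
by apply: ler_sum => g gS; apply: ler_wpM2r; [apply: sqr_ge0 | apply: blockN].
Qed.

End BlockEmbedding.

Lemma block_embedding_shattered (R : realType) n (I : finType)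
    (emb : graph n -> I -> R) S (J : graph n -> {set I}) a (N r lam : R) :
  block_embedding emb S J a -> (0 < #|S|)%N -> 0 <= lam -> lam ^+ 2 * #|S|%:R <= N ->
  {in S, forall g, vnorm (emb g) <= r} ->
  (forall g, g \in S -> N <= #|J g|%:R * a g ^+ 2) ->
  shattered (Hclass r lam emb) S.
Proof.
move=> embJ S0 lam0 lamN ball blockN; apply/shatteredP => b s sS.
apply/separable_labelled; split=> [g /sS /ball //|p q hullp hullq].
have N0 : 0 <= N by apply: le_trans lamN; rewrite mulr_ge0 ?sqr_ge0.
have sub_filter c : {subset [seq g <- s | c g] <= S}.
  by move=> g; rewrite mem_filter => /andP [_ /sS].
have disjAB g : g \in [seq g <- s | ~~ b g] -> g \notin [seq g <- s | b g].
  by rewrite !mem_filter negb_and => /andP [-> _].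
have := hull_sqdist_ge embJ N0 blockN (sub_filter _) (sub_filter _) disjAB hullp hullq.
rewrite vdist_ge_sqr ?mulr_ge0 //; apply: le_trans.
rewrite ler_pdivlMr ?ltr0n // exprMn; nra.
Qed.

(** * Sum graphs and their WL colours *)

Section SumGraphs.
Local Open Scope nat_scope.

Definition sum_graph_ffun n w : {ffun 'I_n -> {ffun 'I_n -> bool}} :=
  [ffun u : 'I_n => [ffun v : 'I_n => (u != v) && ((u + v) %% n < w)]].

Lemma sum_graph_ffun_is_graph n w : is_graph (sum_graph_ffun n w).
Proof.
apply/andP; split; last by apply/forallP => u; rewrite !ffunE eqxx.
apply/forallP => u; apply/forallP => v; rewrite !ffunE.
by rewrite [(u + v)%N]addnC [v == u]eq_sym.
Qed.

Definition sum_graph n w : graph n :=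
  exist _ (sum_graph_ffun n w) (sum_graph_ffun_is_graph n w).

Definition degree n (G : graph n) (v : 'I_n) : nat := #|[set u | adj G v u]|.

Lemma card_ord_lt n w : w <= n -> #|[set k : 'I_n | k < w]| = w.
Proof.
move=> wn; have widen_inj : injective (widen_ord wn).
  by move=> a b /(congr1 val) /= /val_inj.
rewrite -[RHS]card_ord -(card_imset _ widen_inj).
apply: eq_card => k; rewrite inE.
apply/idP/imsetP => [kw|[k' _ ->]]; last exact: (ltn_ord k').
by exists (Ordinal kw) => //; apply: val_inj.
Qed.

(* [v |-> (u + v) %% n] is a bijection of ['I_n]; [u] is not its own neighbour. *)
Lemma degree_sum_graph n w (u : 'I_n) : w <= n ->
  degree (sum_graph n w) u + ((u + u) %% n < w) = w.
Proof.
move=> wn; have n0 : 0 < n by apply: leq_ltn_trans (ltn_ord u).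
pose shift (v : 'I_n) : 'I_n := Ordinal (ltn_pmod (u + v) n0).
have shift_inj : injective shift.
  move=> v1 v2 /(congr1 val) /= /eqP; rewrite eqn_modDl => /eqP.
  by rewrite !modn_small // => /val_inj.
rewrite -[RHS](card_ord_lt wn) -(card_preimset _ shift_inj) (cardD1 u) !inE addnC.
by congr (_ + _); apply: eq_card => v; rewrite !inE /adj /= !ffunE eq_sym.
Qed.

End SumGraphs.

Section WLColours.
Local Open Scope nat_scope.
Variable Fs : seq pattern.

(* A round-[t.+1] colour codes the list of the previous colour and the
   neighbours' colours, so it determines the degree. *)
Lemma size_decode_wlcolS t n (G : graph n) v :
  size (CodeSeq.decode (wlcol Fs t.+1 G v)) = (degree G v).+1.
Proof.
rewrite /= /relabel CodeSeq.codeK /= size_sort size_map size_filter /degree.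
rewrite -sum1_count -sum1_card big_enum_cond; congr _.+1.
by apply: eq_bigl => u; rewrite inE.
Qed.

Definition band n s : graph n := sum_graph n (2 * s + 1).

Lemma degree_band n s v : 2 * s + 1 <= n -> 2 * s <= degree (band n s) v <= 2 * s + 1.
Proof. by move=> sn; have := degree_sum_graph v sn; rewrite /band; case: (_ < _); lia. Qed.

Lemma wlcount_band_overlap n s s' t c : 2 * s + 1 <= n -> 2 * s' + 1 <= n -> 0 < t ->
  0 < wlcount Fs t (band n s) c -> 0 < wlcount Fs t (band n s') c -> s = s'.
Proof.
move=> sn s'n; case: t => // t _.
move=> /card_gt0P [v]; rewrite inE => /eqP colv.
move=> /card_gt0P [v']; rewrite inE => /eqP colv'.
have := size_decode_wlcolS t (band n s) v; rewrite colv -colv' size_decode_wlcolS.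
by move=> [deg_eq]; have := degree_band v sn; have := degree_band v' s'n; lia.
Qed.

Definition band_family n K : {set graph n} := [set band n s | s : 'I_K].

Lemma card_band_family n K : K * 2 <= n -> #|band_family n K| = K.
Proof.
move=> Kn; rewrite card_imset ?card_ord // => s s' band_eq; apply: ord_inj.
have sn : 2 * s + 1 <= n by have := ltn_ord s; lia.
have s'n : 2 * s' + 1 <= n by have := ltn_ord s'; lia.
have n0 : 0 < n by lia.
have := degree_band (Ordinal n0) sn; rewrite band_eq.
by have := degree_band (Ordinal n0) s'n; lia.
Qed.

Definition colour_disjoint n (S : {set graph n}) : Prop :=
  forall g g', g \in S -> g' \in S -> g != g' ->
  forall t c, 0 < t -> 0 < wlcount Fs t g c -> wlcount Fs t g' c = 0.

Lemma band_family_colour_disjoint n K : K * 2 <= n -> colour_disjoint (band_family n K).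
Proof.
move=> Kn _ _ /imsetP [s _ ->] /imsetP [s' _ ->] band_neq t c t0 cs.
have sn : 2 * s + 1 <= n by have := ltn_ord s; lia.
have s'n : 2 * s' + 1 <= n by have := ltn_ord s'; lia.
apply/eqP; rewrite -leqn0 leqNgt; apply: contra band_neq => cs'.
by rewrite (ord_inj (wlcount_band_overlap sn s'n t0 cs cs')).
Qed.

End WLColours.

(** * The WLOA embedding of a colour-disjoint family *)

Lemma card_nth (T : Type) (x0 : T) (s : seq T) (p : pred T) :
  #|[set i : 'I_(size s) | p (nth x0 s i)]| = count p s.
Proof.
rewrite -sum1_card -sum1_count (big_nth x0) big_mkord.
by apply: eq_bigl => i; rewrite inE.
Qed.

Lemma count_iota_le c m : count (fun j => (j <= c)%N) (iota 1 m) = minn c m.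
Proof.
elim: m => [|m IH]; first by rewrite minn0.
by rewrite -[m.+1]addn1 iotaD count_cat IH /=; lia.
Qed.

Section WLOACoordinates.
Local Open Scope nat_scope.
Variables (Fs : seq pattern) (n T : nat).

Lemma sum_wlcount t (G : graph n) : \sum_(c <- Sigma Fs n t) wlcount Fs t G c = n.
Proof.
under eq_bigr => c _ do rewrite /wlcount -sum1_card big_mkcond /=.
rewrite exchange_big /= -[n in RHS]card_ord -sum1_card; apply: eq_bigr => v _.
have colv : wlcol Fs t G v \in Sigma Fs n t.
  by rewrite mem_undup; apply/allpairsP; exists (G, v); rewrite !mem_enum.
transitivity (count_mem (wlcol Fs t G v) (Sigma Fs n t)).
  by rewrite -sum1_count [RHS]big_mkcond; apply: eq_bigr => c _; rewrite inE eq_sym.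
by rewrite count_uniq_mem ?undup_uniq ?colv.
Qed.

Definition active (G : graph n) (x : nat * nat * nat) : bool :=
  x.2 <= wlcount Fs x.1.1 G x.1.2.

Lemma count_coords_active (G : graph n) (P : pred nat) :
  count (fun x => P x.1.1 && active G x) (coords Fs n T) = count P (iota 0 T.+1) * n.
Proof.
rewrite -!sum1_count big_distrl big_mkcond [RHS]big_mkcond /coords big_flatten big_map.
apply: eq_bigr => t _; rewrite big_allpairs_dep /=; case: (P t) => /=.
  rewrite mul1n -[RHS](sum_wlcount t G); apply: eq_bigr => c _.
  rewrite -big_mkcond sum1_count /active /= count_iota_le; apply/minn_idPl.
  by rewrite /wlcount -[n in _ <= n]card_ord max_card.
by rewrite big1 // => c _; rewrite big1.
Qed.

Local Notation coord i := (nth (0, 0, 0) (coords Fs n T) i).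

Lemma card_active (G : graph n) (P : pred nat) :
  #|[set i : 'I_(dT Fs n T) | P (coord i).1.1 && active G (coord i)]|
    = count P (iota 0 T.+1) * n.
Proof. by rewrite (card_nth _ _ (fun x => P x.1.1 && active G x)) count_coords_active. Qed.

Lemma coord_j_gt0 (i : 'I_(dT Fs n T)) : 0 < (coord i).2.
Proof.
have /flattenP [_ /mapP [t _ ->]] : coord i \in coords Fs n T by apply: mem_nth.
by move=> /allpairsP [[c j] [_ + ->]]; rewrite mem_iota => /andP [].
Qed.

Definition wl_block (G : graph n) : {set 'I_(dT Fs n T)} :=
  [set i : 'I_(dT Fs n T) | (0 < (coord i).1.1) && active G (coord i)].

Lemma card_wl_block G : #|wl_block G| = T * n.
Proof.
rewrite card_active /= (eq_in_count (a2 := predT)) ?count_predT ?size_iota //.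
by move=> t; rewrite mem_iota => /andP [].
Qed.

Lemma in_wl_block G i : i \in wl_block G ->
  0 < (coord i).1.1 /\ 0 < wlcount Fs (coord i).1.1 G (coord i).1.2.
Proof. by rewrite inE => /andP [-> /(leq_trans (coord_j_gt0 i))]. Qed.

End WLOACoordinates.

Section WLOAEmbedding.
Variables (R : realType) (Fs : seq pattern) (n T : nat).
Local Notation coord i := (nth (0, 0, 0)%N (coords Fs n T) i).

Lemma phiWLOA_active (G : graph n) i :
  phiWLOA Fs T G i = (active Fs G (coord i))%:R :> R.
Proof. by rewrite /phiWLOA /active; case: nth => [[t c] j]; case: leqP. Qed.

Lemma sqnorm_phiWLOA (G : graph n) : sqnorm (phiWLOA Fs T G : _ -> R) = (T.+1 * n)%:R.
Proof.
have -> : sqnorm (phiWLOA Fs T G : _ -> R)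
    = \sum_(i < dT Fs n T) (predT (coord i).1.1 && active Fs G (coord i) : nat)%:R.
  by apply: eq_bigr => i _; rewrite phiWLOA_active; case: active; rewrite ?expr1n ?expr0n.
have -> : (T.+1 * n)%N = (count predT (iota 0 T.+1) * n)%N by rewrite count_predT size_iota.
rewrite -natr_sum -(card_active Fs T G) -sum1_card [in RHS]big_mkcond /=.
by congr _%:R; apply: eq_bigr => i _; rewrite inE.
Qed.

Lemma phiWLOA_block_embedding (S : {set graph n}) : colour_disjoint Fs S ->
  block_embedding (phiWLOA Fs T : _ -> _ -> R) S (wl_block Fs T) (fun _ => 1).
Proof.
move=> disjS; split=> [g g' i gS g'S iJ | g g' gS g'S gg'].
  rewrite phiWLOA_active mulr1; case: eqP => [->|/eqP g'g].
    by move: iJ; rewrite inE => /andP [_ ->].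
  have [t0 cg] := in_wl_block iJ.
  by rewrite /active (disjS g g') 1?eq_sym // leqn0 gtn_eqF // coord_j_gt0.
apply/pred0P => i /=; apply/negbTE/negP => /andP [/in_wl_block [t0 cg] /in_wl_block [_]].
by rewrite (disjS g g').
Qed.

Lemma nphiWLOAE (G : graph n) :
  nphiWLOA Fs T G = (fun i => phiWLOA Fs T G i / Num.sqrt ((T.+1 * n)%:R : R)).
Proof. by apply: funext => i; rewrite /nphiWLOA /vnorm sqnorm_phiWLOA. Qed.

End WLOAEmbedding.

Section WLOAVCdim.
Variables (R : realType) (Fs : seq pattern) (n T : nat) (lam : R) (K : nat).
Hypotheses (lam0 : 0 <= lam) (K0 : (0 < K)%N) (Kn : (K * 2 <= n)%N).

Lemma phiWLOA_VCdim_ge : lam ^+ 2 * K%:R <= (T * n)%:R ->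
  (K <= VCdim (Hclass (Num.sqrt ((T.+1 * n)%:R)) lam (@phiWLOA R Fs n T)))%N.
Proof.
move=> lamK; rewrite -{1}(card_band_family Kn); apply: card_le_VCdim.
apply: (block_embedding_shattered (N := (T * n)%:R) (phiWLOA_block_embedding R T
  (band_family_colour_disjoint (Fs := Fs) Kn))) => //.
1,2: by rewrite (card_band_family Kn).
- by move=> g _; rewrite /vnorm sqnorm_phiWLOA.
- by move=> g _; rewrite card_wl_block expr1n mulr1.
Qed.

Lemma nphiWLOA_VCdim_ge : lam ^+ 2 * K%:R <= T%:R / T.+1%:R ->
  (K <= VCdim (Hclass 1 lam (@nphiWLOA R Fs n T)))%N.
Proof.
move=> lamK; rewrite -{1}(card_band_family Kn); apply: card_le_VCdim.
have n0 : (0 < T.+1 * n)%N by rewrite muln_gt0 /=; lia.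
have -> : @nphiWLOA R Fs n T = fun g i => phiWLOA Fs T g i / Num.sqrt ((T.+1 * n)%:R).
  by apply: funext => g; apply: nphiWLOAE.
apply: (block_embedding_shattered (N := T%:R / T.+1%:R) (block_embedding_scale _
  (phiWLOA_block_embedding R T (band_family_colour_disjoint (Fs := Fs) Kn)))) => //.
1,2: by rewrite (card_band_family Kn).
- move=> g _; rewrite -(sqnorm_phiWLOA R Fs T g) vnorm_normalize //.
  by rewrite sqnorm_phiWLOA ltr0n.
- move=> g _; rewrite card_wl_block expr_div_n expr1n sqr_sqrtr ?ler0n //.
  have nR0 : n%:R != 0 :> R by rewrite pnatr_eq0 -lt0n; lia.
  rewrite [X in _ <= X](_ : _ = T%:R / T.+1%:R) // !natrM -natr1; field.
  by rewrite nR0 natr1 pnatr_eq0.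
Qed.

End WLOAVCdim.

Lemma exists_nat_between_half (R : realType) (y : R) :
  2 <= y -> exists2 K : nat, (0 < K)%N & y / 2 <= K%:R <= y.
Proof.
move=> y2; have /andP [truncn_le lt_truncn] : (Num.truncn y)%:R <= y < (Num.truncn y).+1%:R.
  by apply: truncn_itv; lra.
exists (Num.truncn y); last by rewrite truncn_le; move: lt_truncn; rewrite -natr1; lra.
by rewrite truncn_gt_nat; lra.
Qed.

Section Corollary.
Variables (R : realType) (Fs : seq pattern) (T : nat) (lam : R) (n : nat).
Hypotheses (T0 : (0 < T)%N) (lam0 : 0 < lam).

Lemma phiWLOA_VCdim_Theta : let r := Num.sqrt ((T.+1 * n)%:R : R) in
  r ^+ 2 / lam ^+ 2 <= n%:R -> 8 <= r ^+ 2 / lam ^+ 2 ->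
  1 / 8 * (r ^+ 2 / lam ^+ 2) <= (VCdim (Hclass r lam (@phiWLOA R Fs n T)))%:R
  /\ (VCdim (Hclass r lam (@phiWLOA R Fs n T)))%:R <= 3 * (r ^+ 2 / lam ^+ 2).
Proof.
move=> r Xn X8; set X := r ^+ 2 / lam ^+ 2 in Xn X8 *.
split; last by apply: VCdim_le_linear => //; rewrite -/X; lra.
set L := lam ^+ 2; have L0 : 0 < L by rewrite exprn_gt0.
set a : R := T%:R; set m : R := n%:R.
have a1 : 1 <= a by rewrite ler1n.
have m0 : 0 <= m by rewrite ler0n.
have XL : X * L = (a + 1) * m.
  by rewrite /X mulfVK ?gt_eqF // /r sqr_sqrtr ?ler0n // natrM -natr1.
(* Take about [T n / (2 lam^2)] band graphs. *)
set y := a * m / (2 * L).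
have yL : y * L = a * m / 2 by rewrite /y; field; rewrite gt_eqF.
have y2 : 2 <= y by nra.
have [K K0 /andP [yK Ky]] := exists_nat_between_half y2.
have Kn : (K * 2 <= n)%N by rewrite -(ler_nat R) natrM -/m; nra.
have lamK : L * K%:R <= (T * n)%:R by rewrite natrM -/a -/m; nra.
have XK : 1 / 8 * X <= K%:R by nra.
by apply: le_trans XK _; rewrite ler_nat phiWLOA_VCdim_ge // ltW.
Qed.

Lemma nphiWLOA_VCdim_Theta : let r := Num.sqrt (T%:R / T.+1%:R : R) in
  r ^+ 2 / lam ^+ 2 <= n%:R -> 8 <= 1 / lam ^+ 2 ->
  1 / 8 * (1 / lam ^+ 2) <= (VCdim (Hclass 1 lam (@nphiWLOA R Fs n T)))%:R
  /\ (VCdim (Hclass 1 lam (@nphiWLOA R Fs n T)))%:R <= 3 * (1 / lam ^+ 2).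
Proof.
move=> r Xn Y8; set Y := 1 / lam ^+ 2 in Y8 *.
split; last first.
  by have := VCdim_le_linear (@nphiWLOA R Fs n T) (r := 1) lam0; rewrite expr1n -/Y; apply; lra.
set L := lam ^+ 2; have L0 : 0 < L by rewrite exprn_gt0.
pose N : R := T%:R / T.+1%:R.
have T1 : 1 <= T%:R :> R by rewrite ler1n.
have N2 : 1 / 2 <= N by rewrite /N ler_pdivlMr ?ltr0n // -[T.+1%:R]natr1; lra.
have NYn : N * Y <= n%:R.
  by move: Xn; rewrite /r sqr_sqrtr ?divr_ge0 ?ler0n // /Y /N mul1r.
(* Take about [T / (2 (T + 1) lam^2)] band graphs. *)
set y := N * Y / 2.
have yE : 2 * y = N * Y by rewrite /y; lra.
have yL : y * L = N / 2 by rewrite /y /Y /L; field; rewrite gt_eqF.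
have y2 : 2 <= y by nra.
have [K K0 /andP [yK Ky]] := exists_nat_between_half y2.
have Kn : (K * 2 <= n)%N by rewrite -(ler_nat R) natrM; lra.
have lamK : L * K%:R <= N by nra.
have YK : 1 / 8 * Y <= K%:R by nra.
by apply: le_trans YK _; rewrite ler_nat nphiWLOA_VCdim_ge // ltW.
Qed.

End Corollary.

Theorem corollary7 (R : realType) (Fs : seq pattern) :
  (exists c1 c2 x0 : R, [/\ 0 < c1, 0 < c2 &
     forall (T : nat) (lam : R) (n : nat), (0 < T)%N -> 0 < lam ->
       let r := Num.sqrt ((T.+1 * n)%:R : R) in
       r ^+ 2 / lam ^+ 2 <= n%:R -> x0 <= r ^+ 2 / lam ^+ 2 ->
       c1 * (r ^+ 2 / lam ^+ 2) <= (VCdim (Hclass r lam (@phiWLOA R Fs n T)))%:R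
       /\ (VCdim (Hclass r lam (@phiWLOA R Fs n T)))%:R <= c2 * (r ^+ 2 / lam ^+ 2)])
  /\
  (exists c1 c2 x0 : R, [/\ 0 < c1, 0 < c2 &
     forall (T : nat) (lam : R) (n : nat), (0 < T)%N -> 0 < lam ->
       let r := Num.sqrt (T%:R / (T.+1)%:R : R) in
       r ^+ 2 / lam ^+ 2 <= n%:R -> x0 <= 1 / lam ^+ 2 ->
       c1 * (1 / lam ^+ 2) <= (VCdim (Hclass 1 lam (@nphiWLOA R Fs n T)))%:R
       /\ (VCdim (Hclass 1 lam (@nphiWLOA R Fs n T)))%:R <= c2 * (1 / lam ^+ 2)]).
Proof.
have c1_gt0 : 0 < 1 / 8 :> R by rewrite divr_gt0.
split; exists (1 / 8), 3, 8; split=> // T lam n T0 lam0.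
- exact: phiWLOA_VCdim_Theta.
- exact: nphiWLOA_VCdim_Theta.
Qed.
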